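(* Let $R$ be a commutative ring with identity. Then the cozero-divisor graph $\Gamma'(R)$ is outerplanar if and only if $\Gamma''_I(R)$ is outerplanar for every ideal $I$ of $R$.
   Context: $\Gamma'(R)$ is the simple undirected graph whose vertices are the nonzero non-unit elements of $R$, with distinct vertices $x,y$ adjacent if and only if $x\notin yR$ and $y\notin xR$. For an ideal $I$ of $R$, $\Gamma''_I(R)$ is the simple undirected graph whose vertex set is $\{x\in R\setminus I : xR+I\neq R\}$, with distinct vertices $x,y$ adjacent if and only if $x\notin yR+I$ and $y\notin xR+I$. A graph is outerplanar if it can be drawn in the plane without crossings so that all vertices lie on the unbounded face. *)

From HB Require Import structures.
From mathcomp Require Import all_boot all_order all_algebra.
From mathcomp Require Import all_classical all_reals all_analysis.
From mathcomp Require Import Rstruct Rstruct_topology.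
Set Implicit Arguments. Unset Strict Implicit. Unset Printing Implicit Defensive.
Import Order.TTheory GRing.Theory Num.Theory.
Local Open Scope classical_set_scope.
Local Open Scope ring_scope.

Definition plane := (Rdefinitions.R * Rdefinitions.R)%type.

Definition unit_interval : set Rdefinitions.R := [set t | 0 <= t <= 1].

Definition is_arc (f : Rdefinitions.R -> plane) : Prop :=
  {within unit_interval, continuous f} /\
  (forall s t, unit_interval s -> unit_interval t -> f s = f t -> s = t).

(* A simple undirected graph on vertex type V with adjacency relation adj
   (assumed symmetric and irreflexive where used). *)
Record drawing (V : Type) (adj : V -> V -> Prop) := Drawing {
  pos : V -> plane;
  arc : V -> V -> Rdefinitions.R -> plane;
  pos_inj : injective pos;
  arc_is_arc : forall x y, adj x y -> is_arc (arc x y);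
  arc_start : forall x y, adj x y -> arc x y 0 = pos x;
  arc_end : forall x y, adj x y -> arc x y 1 = pos y;
  arc_sym : forall x y, adj x y -> arc x y @` unit_interval = arc y x @` unit_interval;
  arc_avoids_vertices : forall x y w t, adj x y -> 0 < t < 1 -> arc x y t <> pos w;
  arcs_no_crossing : forall x y u v s t, adj x y -> adj u v ->
    ~ ((x = u /\ y = v) \/ (x = v /\ y = u)) ->
    unit_interval s -> unit_interval t -> arc x y s = arc u v t ->
    exists2 w, (w = x \/ w = y) /\ (w = u \/ w = v) & arc x y s = pos w
}.

Definition drawing_set V adj (d : @drawing V adj) : set plane :=
  [set p | (exists w, p = pos d w) \/
           (exists x y t, adj x y /\ unit_interval t /\ p = arc d x y t)].

Definition is_face V adj (d : @drawing V adj) (F : set plane) : Prop :=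
  exists2 p, (~` drawing_set d) p & F = connected_component (~` drawing_set d) p.

Definition unbounded_set (F : set plane) : Prop :=
  forall M : Rdefinitions.R, exists2 p, F p & (M < `|p.1| \/ M < `|p.2|).

Definition outerplanar (V : Type) (adj : V -> V -> Prop) : Prop :=
  exists d : @drawing V adj, exists F : set plane,
    [/\ is_face d F, unbounded_set F & forall v, closure F (pos d v)].

Definition is_ideal (R : comNzRingType) (I : R -> Prop) : Prop :=
  [/\ I 0, (forall a b, I a -> I b -> I (a + b)) & (forall a r, I a -> I (a * r))].

Definition principal (R : comNzRingType) (x : R) : R -> Prop :=
  fun z => exists r, z = x * r.

Definition principal_plus (R : comNzRingType) (x : R) (I : R -> Prop) : R -> Prop :=
  fun z => exists r i, I i /\ z = x * r + i.

Definition cozero_vertex (R : comNzRingType) := {x : R | x <> 0 /\ ~ (exists y, x * y = 1)}.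

Definition cozero_adj (R : comNzRingType) (x y : cozero_vertex R) : Prop :=
  proj1_sig x <> proj1_sig y /\ ~ principal (proj1_sig y) (proj1_sig x) /\ ~ principal (proj1_sig x) (proj1_sig y).

Definition cozeroI_vertex (R : comNzRingType) (I : R -> Prop) :=
  {x : R | ~ I x /\ ~ (forall z, principal_plus x I z)}.

Definition cozeroI_adj (R : comNzRingType) (I : R -> Prop) (x y : cozeroI_vertex I) : Prop :=
  proj1_sig x <> proj1_sig y /\ ~ principal_plus (proj1_sig y) I (proj1_sig x) /\ ~ principal_plus (proj1_sig x) I (proj1_sig y).

From Pilot Require Import Defs.
From HB Require Import structures.
From mathcomp Require Import all_boot all_order all_algebra.
From mathcomp Require Import all_classical all_reals all_analysis.
From mathcomp Require Import Rstruct Rstruct_topology.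
Import Order.TTheory GRing.Theory Num.Theory.
Local Open Scope classical_set_scope.
Local Open Scope ring_scope.

(* Outerplanarity is inherited by subgraphs: restricting a drawing only removes
   points, so the face of the big drawing lying on the unbounded side is
   contained in a face of the restricted drawing, which is therefore still
   unbounded and still has every vertex on its closure. Both implications then
   follow from two subgraph relations: for an ideal I, the identity on elements
   maps Gamma''_I(R) into Gamma'(R), because xR is contained in xR + I; and
   Gamma'(R) is Gamma''_0(R). *)

Lemma proj1_sig_inj (T : Type) (P : T -> Prop) : injective (@proj1_sig T P).
Proof. by move=> [a ?] [b ?] /= ab; exact: eq_exist. Qed.

Section Subgraph.
Variables (V W : Type) (adjV : V -> V -> Prop) (adjW : W -> W -> Prop).
Variable f : V -> W.
Hypothesis f_inj : injective f.
Hypothesis f_adj : forall x y, adjV x y -> adjW (f x) (f y).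

Lemma shared_endpoint_inj {x y u v : V} {w : W} :
  (w = f x \/ w = f y) -> (w = f u \/ w = f v) ->
  exists2 w', (w' = x \/ w' = y) /\ (w' = u \/ w' = v) & w = f w'.
Proof.
have end_uv z : w = f z -> (w = f u \/ w = f v) -> z = u \/ z = v.
  by move=> wz [] wE; [left|right]; apply: f_inj; rewrite -wz -wE.
by case=> wE uv; [exists x | exists y]; rewrite ?wE; do ?split; auto.
Qed.

Definition drawing_comp (d : drawing adjW) : drawing adjV.
refine (@Drawing V adjV (Defs.pos d \o f) (fun x y => Defs.arc d (f x) (f y)) _ _ _ _ _ _ _).
- by move=> a b /(@pos_inj _ _ d) /f_inj.
- by move=> x y /f_adj /(arc_is_arc d).
- by move=> x y /f_adj /(arc_start d).
- by move=> x y /f_adj /(arc_end d).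
- by move=> x y /f_adj /(arc_sym d).
- by move=> x y w t /f_adj; apply: arc_avoids_vertices.
- move=> x y u v s t /f_adj adj_xy /f_adj adj_uv ne_xyuv Is It E.
  have ne_f : ~ ((f x = f u /\ f y = f v) \/ (f x = f v /\ f y = f u)).
    by case=> [[/f_inj xu /f_inj yv]|[/f_inj xv /f_inj yu]]; apply: ne_xyuv; auto.
  have [w [xy_w uv_w] ->] := arcs_no_crossing adj_xy adj_uv ne_f Is It E.
  have [w' xyuv_w' ->] := shared_endpoint_inj xy_w uv_w.
  by exists w'.
Defined.

Lemma drawing_set_comp d : drawing_set (drawing_comp d) `<=` drawing_set d.
Proof.
move=> q [[w ->]|[x [y [t [adj_xy [It ->]]]]]]; first by left; exists (f w).
by right; exists (f x), (f y), t; split => //; apply: f_adj.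
Qed.

Lemma outerplanar_subgraph : outerplanar adjW -> outerplanar adjV.
Proof.
move=> [d [F [[p Dp ->] unbF clF]]].
set C := ~` drawing_set (drawing_comp d).
have DC : ~` drawing_set d `<=` C by move=> q Dq /drawing_set_comp.
have FC : connected_component (~` drawing_set d) p `<=` connected_component C p.
  apply: connected_component_max; last exact: component_connected.
  - exact: connected_component_refl.
  - by move=> q /connected_component_sub /DC.
exists (drawing_comp d), (connected_component C p); split.
- by exists p; first exact: DC.
- by move=> M; have [q Fq Mq] := unbF M; exists q => //; apply: FC.
- by move=> v; apply: (closureS FC); apply: clF.
Qed.

End Subgraph.

Section CozeroGraphs.
Variable R : comNzRingType.
Implicit Types (x : R) (I : set R).

Lemma principal_sub_plus I x : I 0 -> principal x `<=` principal_plus x I.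
Proof. by move=> I0 z [r ->]; exists r, 0; rewrite addr0. Qed.

Lemma principal_plus0 x : principal_plus x [set 0] = principal x.
Proof.
apply/seteqP; split; last exact: principal_sub_plus.
by move=> z [r [i [-> ->]]]; exists r; rewrite addr0.
Qed.

Lemma principalT_unit x : (forall z, principal x z) <-> exists y, x * y = 1.
Proof.
split=> [/(_ 1) [y xy1] | [y xy1] z]; first by exists y.
by exists (y * z); rewrite mulrA xy1 mul1r.
Qed.

Lemma is_ideal0 : is_ideal [set 0 : R].
Proof. by split=> [//|a b -> ->|a r ->]; rewrite ?addr0 ?mul0r. Qed.

Lemma cozeroI_vertex_cozero I (I0 : I 0) (x : cozeroI_vertex I) :
  proj1_sig x <> 0 /\ ~ (exists y, proj1_sig x * y = 1).
Proof.
case: x => x [nIx nfull] /=; split; first by move=> x0; apply: nIx; rewrite x0.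
by move/principalT_unit => full; apply: nfull => z; apply: principal_sub_plus.
Qed.

Lemma cozero_vertex_cozero0 (x : cozero_vertex R) :
  ~ [set 0] (proj1_sig x) /\ ~ (forall z, principal_plus (proj1_sig x) [set 0] z).
Proof. by case: x => x [x0 nunit] /=; rewrite principal_plus0 principalT_unit. Qed.

Definition cozeroI_to_cozero I (I0 : I 0) (x : cozeroI_vertex I) : cozero_vertex R :=
  exist _ _ (cozeroI_vertex_cozero I I0 x).

Definition cozero_to_cozero0 (x : cozero_vertex R) : cozeroI_vertex [set 0] :=
  exist _ _ (cozero_vertex_cozero0 x).

Lemma cozeroI_subgraph I (I0 : I 0) :
  outerplanar (@cozero_adj R) -> outerplanar (@cozeroI_adj R I).
Proof.
apply: (@outerplanar_subgraph _ _ _ _ (cozeroI_to_cozero I I0)).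
  by move=> a b [/proj1_sig_inj].
move=> [x ?] [y ?] [/= xy [nyx nxy]]; split=> //=.
by split=> /(principal_sub_plus I _ I0).
Qed.

Lemma cozero_subgraph0 :
  outerplanar (@cozeroI_adj R [set 0]) -> outerplanar (@cozero_adj R).
Proof.
apply: (@outerplanar_subgraph _ _ _ _ cozero_to_cozero0).
  by move=> a b [/proj1_sig_inj].
by move=> [x ?] [y ?]; rewrite /cozeroI_adj /= !principal_plus0.
Qed.

End CozeroGraphs.

Theorem proposition3p12 (R : comNzRingType) :
  outerplanar (@cozero_adj R) <->
  (forall I : R -> Prop, is_ideal I -> outerplanar (@cozeroI_adj R I)).
Proof.
split=> [Gamma_out I [I0 _ _] | GammaI_out].
- exact: cozeroI_subgraph.
- exact/cozero_subgraph0/GammaI_out/is_ideal0.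
Qed.
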